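(* Let $k\ge 4$ be an integer, let $t$ be a positive integer divisible by $\operatorname{lcm}(2,3,\ldots,2k-1)$, and let $n$ be an integer with $k^2-k \le n \le 4k^2-10k+5$. Suppose $S$ is a $k$-bounded zero-sum sequence of length $|S| = t+n$ that is $t$-avoiding. Then there exist integers $\alpha>0$ and $\beta>0$ such that $v_\alpha(S) \ge \frac{k}{k+1}n$ and $v_{-\beta}(S) \ge \frac{k}{k+1}n$.
   Context: A sequence is a finite multiset of integers; $|S|$ is its length counted with multiplicity, $v_a(S)$ is the multiplicity of the integer $a$ in $S$, and a subsequence $T$ of $S$ is a sub-multiset. $S$ is zero-sum if the sum of its terms is $0$, and $k$-bounded if all terms lie in $[-k,k]$. A zero-sum sequence $S$ is $t$-avoiding if it has no zero-sum subsequence of length exactly $t$. *)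

From mathcomp Require Import all_boot all_order all_algebra.
Set Implicit Arguments. Unset Strict Implicit. Unset Printing Implicit Defensive.
Import Order.TTheory GRing.Theory Num.Theory.
Local Open Scope ring_scope.

(* A sequence (finite multiset of integers) is represented by a list [seq int];
   order is irrelevant for every notion below. *)

Definition mult (a : int) (S : seq int) : nat := count_mem a S.

Definition zero_sum (S : seq int) : bool := \sum_(x <- S) x == 0.

Definition k_bounded (k : nat) (S : seq int) : bool :=
  all (fun x => (- (k%:Z) <= x) && (x <= k%:Z)) S.

(* Sub-multisets of S are exactly the masks of S (up to reordering). *)
Definition has_zs_subseq_of_length (t : nat) (S : seq int) : Prop :=
  exists m : bitseq, size m = size S /\ size (mask m S) = t /\ zero_sum (mask m S).

Definition t_avoiding (t : nat) (S : seq int) : Prop :=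
  zero_sum S /\ ~ has_zs_subseq_of_length t S.

Definition lcm_upto (m : nat) : nat := \big[lcmn/1%N]_(2 <= i < m.+1) i.

From mathcomp Require Import all_boot all_order all_algebra zify.
Import Order.TTheory GRing.Theory Num.Theory.

(* Deleting n zeros from S would leave a zero-sum subsequence of length t, so S
   has fewer than n zeros and hence at least t + 1 nonzero terms.  As S sums to
   zero, its negative terms are at most as many as the total size of its
   positive ones, so the number of nonzero terms is at most
   sum_(1 <= a <= k) (a + 1) v_a(S).  If every such v_a(S) were below
   kn/(k+1), this would be less than (kn/(k+1)) k(k+3)/2, which does not exceed
   t: t is a multiple of the pairwise coprime numbers 2^e, 2k-1, 2k-3, 2k-5,
   where 2^e is the largest power of 2 below 2k, so k <= 2^e.  The same
   argument applied to -S gives beta. *)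

Lemma lcm_upto_gt0 m : 0 < lcm_upto m.
Proof.
rewrite /lcm_upto big_seq; apply: (big_ind (fun x => 0 < x)) => // [x y|i].
  by rewrite lcmn_gt0 => ->.
by rewrite mem_index_iota; case: i.
Qed.

Lemma dvdn_lcm_upto m i : 2 <= i <= m -> i %| lcm_upto m.
Proof.
elim: m => [|m IH] /andP[i_ge2 i_le]; first by case: i i_ge2 i_le.
rewrite /lcm_upto big_nat_recr ?(leq_trans _ i_le) //= -/(lcm_upto m).
rewrite leq_eqVlt in i_le; case/orP: i_le => [/eqP->|i_lt]; first exact: dvdn_lcmr.
by apply: dvdn_trans (dvdn_lcml _ _); apply: IH; rewrite i_ge2.
Qed.

Lemma coprime_odd_addX2 b e : odd b -> coprime (b + 2 ^ e) b.
Proof.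
move=> b_odd; rewrite coprime_sym /coprime gcdnDl -/(coprime b (2 ^ e)).
by rewrite coprime_sym coprimeXl // coprime2n.
Qed.

Lemma lcm_upto_lower_bound {k} : 4 <= k ->
  k * (2 * k - 1) * (2 * k - 3) * (2 * k - 5) <= lcm_upto (2 * k - 1).
Proof.
move=> k_ge4; set e := trunc_log 2 (2 * k - 1).
have pow_le : 2 ^ e <= 2 * k - 1 by apply: trunc_logP => //; lia.
have pow_gt : 2 * k - 1 < 2 ^ e.+1 := trunc_log_ltn _ (isT : 1 < 2).
rewrite expnS in pow_gt.
have dvd_lcm i : 2 <= i <= 2 * k - 1 -> i %| lcm_upto (2 * k - 1) by apply: dvdn_lcm_upto.
set L := lcm_upto _ in dvd_lcm *; set b := 2 * k - 5 in dvd_lcm *.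
have -> : 2 * k - 1 = b + 2 + 2 by lia.
have -> : 2 * k - 3 = b + 2 by lia.
have b_odd : odd b.
  by rewrite /b (_ : 2 * k - 5 = (k - 3).*2.+1) /= ?odd_double // -muln2; lia.
have b2_odd : odd (b + 2) by rewrite oddD b_odd.
have coprime_pow c : odd c -> coprime (2 ^ e) c by move=> c_odd; rewrite coprimeXl // coprime2n.
have prod_dvd : 2 ^ e * (b + 2 + 2) * (b + 2) * b %| L.
  rewrite Gauss_dvd; last first.
    rewrite !coprimeMl coprime_pow // -addnA (coprime_odd_addX2 _ 2) //.
    exact: (coprime_odd_addX2 _ 1).
  rewrite Gauss_dvd; last by rewrite coprimeMl coprime_pow ?(coprime_odd_addX2 _ 1).
  rewrite Gauss_dvd; last by rewrite coprime_pow // oddD b2_odd.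
  by rewrite !dvd_lcm; lia.
apply: leq_trans (dvdn_leq (lcm_upto_gt0 _) prod_dvd).
by rewrite -!mulnA leq_mul2r; apply/orP; right; lia.
Qed.

Lemma frequency_budget k n L : 4 <= k -> n + 10 * k <= 4 * k ^ 2 + 5 ->
  k * (2 * k - 1) * (2 * k - 3) * (2 * k - 5) <= L ->
  (k * n).-1 * (k * (k + 3)) < 2 * k.+1 * L.+1.
Proof.
move=> k_ge4 n_le; have [j k_def] : exists j, k = j + 4 by exists (k - 4); lia.
have n_le' : n <= 4 * j * j + 22 * j + 29 by lia.
subst k; have -> : 2 * (j + 4) - 1 = 2 * j + 7 by lia.
have -> : 2 * (j + 4) - 3 = 2 * j + 5 by lia.
have -> : 2 * (j + 4) - 5 = 2 * j + 3 by lia.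
have := leq_mul (leqnn (j + 4)) n_le'.
nia.
Qed.

Lemma mask_drop_zeros c (S : seq int) : c <= mult 0 S ->
  exists m : bitseq, [/\ size m = size S, size (mask m S) = size S - c
                        & (\sum_(x <- mask m S) x = \sum_(x <- S) x)%R].
Proof.
elim: S c => [|x S IH] c; first by rewrite /mult leqn0 => /eqP ->; exists [::].
rewrite /mult /= => c_le.
have zeros_le := count_size (pred1 0%R) S.
case: c c_le => [|c] c_le.
  have [m [m_size mask_size mask_sum]] := IH 0 (leq0n _).
  by exists (true :: m); rewrite /= !big_cons mask_sum mask_size m_size !subn0.
case: (x =P 0%R) c_le => [->|_] /= c_le.
  have [m [m_size mask_size mask_sum]] := IH c c_le.
  by exists (false :: m); rewrite /= !big_cons mask_sum add0r m_size mask_size.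
have [m [m_size mask_size mask_sum]] := IH c.+1 c_le.
exists (true :: m); rewrite /= !big_cons mask_sum m_size mask_size subSS subnSK //.
exact: leq_trans c_le zeros_le.
Qed.

Lemma has_zs_subseq_drop_zeros c (S : seq int) :
  zero_sum S -> c <= mult 0 S -> has_zs_subseq_of_length (size S - c) S.
Proof.
move=> /eqP S_zs /mask_drop_zeros[m [m_size mask_size mask_sum]].
by exists m; rewrite /zero_sum m_size mask_size mask_sum S_zs.
Qed.

Lemma count_nonzero_le_pos_weight (S : seq int) : zero_sum S ->
  count (fun x => x != 0%R) S <= \sum_(x <- S | (0 < x)%R) (absz x).+1.
Proof.
move=> /eqP S_zs; rewrite -lez_nat -[X in (_ <= X)%R]subr0 -[X in (_ - X)%R]S_zs.
elim: S {S_zs} => [|x S IH]; first by rewrite !big_nil.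
rewrite /= !big_cons; move: IH.
move: (count _ S) (\sum_(j <- S | _) _)%N (\sum_(j <- S) j)%R => c w s.
by case: ltrgtP => x_sign /=; lia.
Qed.

Lemma pos_weight_by_value (k : nat) (S : seq int) :
  all (fun x => x <= k%:Z)%R S ->
  \sum_(x <- S | (0 < x)%R) (absz x).+1 = \sum_(1 <= a < k.+1) a.+1 * mult a%:Z S.
Proof.
move=> S_le; under [RHS]eq_bigr => a _ do rewrite /mult -sum1_count big_distrr /= muln1.
rewrite (exchange_big_dep predT) //= big_mkcond big_seq_cond [RHS]big_seq_cond.
apply: eq_bigr => x /andP[xS _]; have := allP S_le x xS.
case: x {xS} => [m|m] m_le /=; last by rewrite big_pred0.
rewrite (eq_bigl (fun a => a == m)) ?big_nat1_eq => [|a]; last by rewrite eqz_nat.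
by case: m m_le => [|m] m_le //=; rewrite ltnS -lez_nat m_le.
Qed.

Lemma double_sum_succ k : 2 * \sum_(1 <= a < k.+1) a.+1 = k * (k + 3).
Proof.
elim: k => [|k IH]; first by rewrite big_geq.
by rewrite big_nat_recr //= mulnDr IH; lia.
Qed.

Lemma count_nonzero_bound {k c d : nat} {S : seq int} :
  zero_sum S -> all (fun x => x <= k%:Z)%R S ->
  (forall a, 0 < a <= k -> c * mult a%:Z S <= d) ->
  2 * c * count (fun x => x != 0%R) S <= d * (k * (k + 3)).
Proof.
move=> S_zs S_le mult_le; rewrite -double_sum_succ mulnCA -mulnA leq_mul2l /=.
apply: leq_trans (leq_mul (leqnn c) (count_nonzero_le_pos_weight _ S_zs)) _.
rewrite (pos_weight_by_value _ _ S_le) !big_distrr /= big_nat_cond [X in _ <= X]big_nat_cond.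
apply: leq_sum => a /andP[/andP[a_gt0 a_le] _].
have := mult_le a; rewrite a_gt0 -ltnS a_le => /(_ isT); nia.
Qed.

Lemma mult_map_opp a (S : seq int) : mult a ([seq (- x)%R | x <- S]) = mult (- a)%R S.
Proof. by rewrite /mult count_map; apply: eq_count => x /=; rewrite eqr_oppLR. Qed.

Lemma zero_sum_map_opp (S : seq int) : zero_sum ([seq (- x)%R | x <- S]) = zero_sum S.
Proof. by rewrite /zero_sum big_map sumrN oppr_eq0. Qed.

Lemma k_bounded_map_opp k (S : seq int) : k_bounded k ([seq (- x)%R | x <- S]) = k_bounded k S.
Proof.
by rewrite /k_bounded all_map; apply: eq_all => x /=; rewrite lerNl opprK lerNl andbC.
Qed.

Lemma k_bounded_le {k} {S : seq int} : k_bounded k S -> all (fun x => x <= k%:Z)%R S.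
Proof. by apply: sub_all => x /andP[]. Qed.

Lemma exists_frequent_pos {k t n : nat} {S : seq int} :
  all (fun x => x <= k%:Z)%R S -> zero_sum S -> size S = t + n -> mult 0 S < n ->
  (k * n).-1 * (k * (k + 3)) < 2 * k.+1 * t.+1 ->
  exists2 alpha : nat, 0 < alpha & k * n <= k.+1 * mult alpha%:Z S.
Proof.
move=> S_le S_zs S_size zeros_lt budget.
have [/existsP[a /andP[a_gt0 a_freq]] | /existsPn rare] :=
  boolP [exists a : 'I_k.+1, (0 < a) && (k * n <= k.+1 * mult a%:Z S)].
  by exists a.
have mult_le a : 0 < a <= k -> k.+1 * mult a%:Z S <= (k * n).-1.
  case/andP=> a_gt0 a_le; have := rare (Ordinal (a_le : a < k.+1)).
  by rewrite /= a_gt0 -ltnNge; lia.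
have nonzero_count : count (fun x => x != 0%R) S = size S - mult 0 S.
  by rewrite -(count_predC (pred1 0%R) S) addKn.
have := count_nonzero_bound S_zs S_le mult_le.
rewrite nonzero_count S_size; nia.
Qed.

Theorem lemma2p2 (k t n : nat) (S : seq int) :
  (4 <= k)%N -> (0 < t)%N -> (lcm_upto (2 * k - 1) %| t)%N ->
  (k ^ 2 - k <= n)%N -> (n + 10 * k <= 4 * k ^ 2 + 5)%N ->
  k_bounded k S -> zero_sum S -> size S = (t + n)%N -> t_avoiding t S ->
  exists alpha beta : nat, (0 < alpha)%N /\ (0 < beta)%N /\
    (k * n <= k.+1 * mult (alpha%:Z) S)%N /\
    (k * n <= k.+1 * mult (- (beta%:Z))%R S)%N.
Proof.
move=> k_ge4 t_gt0 lcm_dvd _ n_le S_bnd S_zs S_size [_ S_avoid].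
have zeros_lt : mult 0 S < n.
  rewrite ltnNge; apply/negP => zeros_ge; apply: S_avoid.
  by rewrite -(addnK n t) -S_size; apply: has_zs_subseq_drop_zeros.
have budget : (k * n).-1 * (k * (k + 3)) < 2 * k.+1 * t.+1.
  apply: frequency_budget => //.
  exact: leq_trans (lcm_upto_lower_bound k_ge4) (dvdn_leq t_gt0 lcm_dvd).
have [alpha alpha_gt0 alpha_freq] :=
  exists_frequent_pos (k_bounded_le S_bnd) S_zs S_size zeros_lt budget.
have negS_le : all (fun x => x <= k%:Z)%R ([seq (- x)%R | x <- S]).
  by apply: k_bounded_le; rewrite k_bounded_map_opp.
have negS_zs : zero_sum ([seq (- x)%R | x <- S]) by rewrite zero_sum_map_opp.
have negS_size : size ([seq (- x)%R | x <- S]) = t + n by rewrite size_map.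
have negS_zeros : mult 0 ([seq (- x)%R | x <- S]) < n by rewrite mult_map_opp oppr0.
have [beta beta_gt0 beta_freq] :=
  exists_frequent_pos negS_le negS_zs negS_size negS_zeros budget.
by exists alpha, beta; rewrite -mult_map_opp.
Qed.
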